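(* Let $\mathcal{L}_{\rm GM}$ be the golden mean language and let ${\rm S}:\mathcal{L}_{\rm GM}\to\mathbb{N}$ be a homomorphism. Write ${\rm S}_a={\rm S}(a)$, ${\rm S}_b={\rm S}(b)$, and suppose $\gcd({\rm S}_a,{\rm S}_b)=1$, ${\rm S}_a>1$ and ${\rm S}_b>1$. Then $\mathbb{N}\setminus {\rm S}(\mathcal{L}_{\rm GM})$ is finite and nonempty, and $$\max\,\big(\mathbb{N}\setminus {\rm S}(\mathcal{L}_{\rm GM})\big)={\rm S}_a({\rm S}_a-3)+{\rm S}_b({\rm S}_a-1).$$
   Context: $\mathbb{N}=\{1,2,3,\dots\}$. The golden mean language $\mathcal{L}_{\rm GM}$ is the set of all nonempty finite words over the alphabet $\{a,b\}$ in which $bb$ does not occur as a subword (factor). A homomorphism ${\rm S}:\mathcal{L}\to\mathbb{N}$ of a language $\mathcal{L}$ over an alphabet is a map with ${\rm S}(w_1w_2\cdots w_n)={\rm S}(w_1)+\cdots+{\rm S}(w_n)$ for every word $w_1\cdots w_n\in\mathcal{L}$ (equivalently ${\rm S}(vw)={\rm S}(v)+{\rm S}(w)$), so it is determined by the positive integers ${\rm S}(a),{\rm S}(b)$. *)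

From mathcomp Require Import all_boot all_order all_algebra.
Set Implicit Arguments. Unset Strict Implicit. Unset Printing Implicit Defensive.

Inductive letter : Type := La | Lb.

Definition word := seq letter.

Definition golden_mean (w : word) : Prop :=
  w <> [::] /\ ~ (exists u v : word, w = u ++ [:: Lb; Lb] ++ v).

Definition is_hom (S : word -> nat) : Prop :=
  forall w : word, golden_mean w -> S w = sumn [seq S [:: x] | x <- w].

Definition gap (S : word -> nat) (n : nat) : Prop :=
  0 < n /\ ~ (exists w : word, golden_mean w /\ S w = n).

(** The Parikh vectors of golden mean words are the pairs (p, q) <> (0, 0)
    with q <= p + 1, so n = p S_a + q S_b lies in S(L_GM) exactly when
    n + S_a = (p + 1 - q) S_a + q (S_a + S_b) is a nonnegative combination
    of the coprime numbers S_a and S_a + S_b.  By Sylvester's solution of the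
    two-coin Frobenius problem, the largest n + S_a that is not such a
    combination is S_a (S_a + S_b) - S_a - (S_a + S_b). *)

From HB Require Import structures.
From mathcomp Require Import all_boot all_order all_algebra.
From mathcomp Require Import zify.
Import GRing.Theory Num.Theory.

Definition representable (a c n : nat) : Prop := exists x y, x * a + y * c = n.

Section Sylvester.

Variables a c : nat.
Hypothesis coprime_ac : coprime a c.

Lemma not_representable_frobenius :
  1 < a -> 1 < c -> ~ representable a c (a * c - a - c).
Proof.
move=> a_gt1 c_gt1 [x [y Exy]].
have {}Exy : x.+1 * a + y.+1 * c = a * c by nia.
have a_dvd : a %| y.+1.
  rewrite -(Gauss_dvdl _ coprime_ac) -(dvdn_addr _ (dvdn_mull x.+1 (dvdnn a))).
  by rewrite Exy dvdn_mulr.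
have c_dvd : c %| x.+1.
  have coprime_ca : coprime c a by rewrite coprime_sym.
  rewrite -(Gauss_dvdl _ coprime_ca) -(dvdn_addl _ (dvdn_mull y.+1 (dvdnn c))).
  by rewrite Exy dvdn_mull.
have := dvdn_leq (ltn0Sn _) a_dvd; have := dvdn_leq (ltn0Sn _) c_dvd.
nia.
Qed.

Lemma representable_gt_frobenius n :
  0 < a -> 0 < c -> a * c - a - c < n -> representable a c n.
Proof.
move=> a_gt0 c_gt0 n_gt.
have [kc ka inv_c _] := egcdnP a c_gt0.
rewrite gcdnC (eqP coprime_ac) in inv_c.
pose y := (n * kc) %% a.
have y_lt_a : y < a by rewrite ltn_mod.
have yc_eq_n : y * c = n %[mod a].
  by rewrite modnMml -mulnA inv_c mulnDr muln1 mulnA modnMDl.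
have yc_le_n : y * c <= n.
  rewrite leqNgt; apply/negP => n_lt.
  have : a %| y * c - n by rewrite -eqn_mod_dvd ?(ltnW n_lt) // yc_eq_n.
  move/dvdn_leq; rewrite subn_gt0 => /(_ n_lt).
  have : y.+1 * c <= a * c by rewrite leq_mul2r y_lt_a orbT.
  lia.
have /dvdnP[x Ex] : a %| n - y * c by rewrite -eqn_mod_dvd // yc_eq_n.
by exists x, y; rewrite -Ex subnK.
Qed.

End Sylvester.

Definition letter_is_b (x : letter) : bool := if x is Lb then true else false.

Lemma letter_is_bK : cancel letter_is_b (fun b => if b then Lb else La).
Proof. by case. Qed.

HB.instance Definition _ := Equality.copy letter (can_type letter_is_bK).

Local Notation bb := [:: Lb; Lb].

Lemma golden_meanE w : golden_mean w <-> w != [::] /\ ~~ infix bb w.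
Proof.
by split=> -[w_nil bb_free]; split; [exact/eqP | exact/infixP | exact/eqP | exact/infixP].
Qed.

Lemma infix_bb_cons x w :
  infix bb (x :: w) = (x == Lb) && (head La w == Lb) || infix bb w.
Proof. by case: x; case: w => [|[] w] //=; rewrite prefix0s. Qed.

Lemma count_Lb_le w :
  ~~ infix bb w -> count_mem Lb w <= count_mem La w + (head La w == Lb).
Proof.
elim: w => [|x w IHw] //; rewrite infix_bb_cons negb_or => /andP[no_bb_head /IHw].
by case: x no_bb_head => /= [_|/negbTE->]; case: (head La w == Lb); lia.
Qed.

Lemma bb_free_parikh {p q} : q <= p.+1 ->
  exists2 w, ~~ infix bb w & count_mem La w = p /\ count_mem Lb w = q.
Proof.
elim: p q => [|p IHp] q q_le.
  by case: q q_le => [|[|]] // _; [exists [::] | exists [:: Lb]].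
have [q_le_p1 | q_gt_p1] := leqP q p.+1.
  have [w bb_free [ca cb]] := IHp q q_le_p1.
  by exists (La :: w); rewrite ?infix_bb_cons //= ?ca ?cb.
have -> : q = p.+2 by apply/eqP; rewrite eqn_leq q_le q_gt_p1.
have [w bb_free [ca cb]] := IHp p.+1 (leqnn _).
by exists [:: Lb, La & w]; rewrite ?infix_bb_cons //= ?ca ?cb.
Qed.

Lemma sumn_letters (S : word -> nat) w :
  sumn [seq S [:: x] | x <- w] = count_mem La w * S [:: La] + count_mem Lb w * S [:: Lb].
Proof.
elim: w => [|[] w IHw] //=; rewrite IHw add0n mulnDl mul1n addnA //.
by rewrite [S [:: Lb] + _]addnC -addnA.
Qed.

Lemma hom_imageE S n : is_hom S -> 0 < n ->
  (exists w, golden_mean w /\ S w = n) <->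
  exists p q, q <= p.+1 /\ p * S [:: La] + q * S [:: Lb] = n.
Proof.
move=> homS n_gt0; split=> [[w [gm_w <-]] | [p [q [q_le pq_n]]]].
  have /golden_meanE[_ bb_free] := gm_w.
  exists (count_mem La w), (count_mem Lb w); split; last by rewrite (homS w gm_w) sumn_letters.
  by rewrite -addn1 (leq_trans (count_Lb_le _ bb_free)) ?leq_add2l ?leq_b1.
have [w bb_free [ca cb]] := bb_free_parikh q_le.
have gm_w : golden_mean w.
  by apply/golden_meanE; split=> //; apply: contraTneq n_gt0 => w_nil; rewrite -pq_n -ca -cb w_nil.
by exists w; rewrite (homS w gm_w) sumn_letters ca cb.
Qed.

Lemma parikh_representable A B n : 0 < A ->
  (exists p q, q <= p.+1 /\ p * A + q * B = n) <-> representable A (A + B) (n + A).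
Proof.
move=> A_gt0; split=> [[p [q [q_le <-]]] | [x [y Exy]]].
  by exists (p.+1 - q), q; rewrite mulnDr addnA -mulnDl subnK // mulSn; lia.
have xy_gt0 : 0 < x + y by move: Exy; case: x y => [|x] [|y] //=; lia.
exists (x + y).-1, y; split; first by rewrite prednK ?leq_addl.
have : (x + y).-1 * A + A = x * A + y * A by rewrite -mulSnr prednK ?mulnDl.
by move: Exy; rewrite mulnDr; lia.
Qed.

Lemma frobenius_addr_gt A B : coprime A B -> 1 < A -> 1 < B ->
  A < A * (A + B) - A - (A + B).
Proof.
move=> coprime_AB A_gt1 B_gt1; case: (ltnP 2 A) => [A_gt2 | A_le2].
  have : 3 * (A + B) <= A * (A + B) by rewrite leq_mul2r A_gt2 orbT.
  lia.
have A2 : A = 2 by lia.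
have : B != 2 by apply: contraTneq coprime_AB => B2; rewrite A2 B2.
rewrite A2; lia.
Qed.

Theorem theorem1 (S : word -> nat)
  (hS : is_hom S)
  (hpos : forall w, golden_mean w -> 0 < S w)
  (hgcd : gcdn (S [:: La]) (S [:: Lb]) = 1)
  (ha : 1 < S [:: La]) (hb : 1 < S [:: Lb]) :
  (exists n, gap S n) /\
  (exists B, forall n, gap S n -> n <= B) /\
  (exists m, gap S m /\ (forall n, gap S n -> n <= m) /\
     (Posz m = (Posz (S [:: La]) * (Posz (S [:: La]) - 3)
               + Posz (S [:: Lb]) * (Posz (S [:: La]) - 1))%R)).
Proof.
move: hgcd ha hb; set A := S [:: La]; set B := S [:: Lb] => hgcd ha hb.
have coprime_AB : coprime A B by rewrite /coprime hgcd.
have coprime_AC : coprime A (A + B) by rewrite /coprime gcdnDl.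
have gapE n : gap S n <-> 0 < n /\ ~ representable A (A + B) (n + A).
  rewrite -parikh_representable; last exact: ltnW.
  by split=> -[n_gt0 not_im]; split=> //; move: not_im; rewrite hom_imageE.
have A_lt_frobenius := frobenius_addr_gt _ _ coprime_AB ha hb.
pose m := A * (A + B) - A - (A + B) - A.
have gap_m : gap S m.
  apply/gapE; split; first by rewrite /m; lia.
  rewrite /m subnK; last lia.
  by apply: not_representable_frobenius => //; lia.
have gap_le_m n : gap S n -> n <= m.
  case/gapE => _; apply: contra_not_leq => m_lt_n.
  by apply: representable_gt_frobenius; lia.
split; first by exists m.
split; first by exists m.
by exists m; do !split => //; rewrite /m; lia.
Qed.
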